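(* For every $n\in\mathbb{N}$, \[ \frac{2n+1}{n+1}\,{}_3F_2\!\left(1,1,2n+2;\,2,n+2;\,\tfrac12\right)=H_n+2\log 2. \]
   Context: Pochhammer symbol: $(\alpha)_0=1$, $(\alpha)_k=\alpha(\alpha+1)\cdots(\alpha+k-1)$. ${}_3F_2(a,b,c;d,e;z)=\sum_{k\ge0}\frac{(a)_k(b)_k(c)_k}{(d)_k(e)_k}\frac{z^k}{k!}$. $H_n=\sum_{k=1}^{n}\frac1k$ ($H_0=0$). *)

From Stdlib Require Import Reals Arith.
Open Scope R_scope.

Fixpoint poch (a : R) (k : nat) : R :=
  match k with
  | O => 1
  | S k' => poch a k' * (a + INR k')
  end.

Definition F32_term (a b c d e z : R) (k : nat) : R :=
  (poch a k * poch b k * poch c k) / (poch d k * poch e k) * (z ^ k / INR (Factorial.fact k)).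

Definition F32_is (a b c d e z L : R) : Prop :=
  infinite_sum (F32_term a b c d e z) L.

Fixpoint harmonic (n : nat) : R :=
  match n with
  | O => 0
  | S n' => harmonic n' + / INR (S n')
  end.

(** Write [w_n(k) = (2n+2)_k / (n+2)_k * 2^-k], so that the [k]-th summand of the
    hypergeometric series is [w_n(k) / (k+1)].  The normalized summands
    [b_n(k) = (2n+1)/(n+1) * w_n(k)/(k+1)] satisfy the telescoping identity
    [b_(n+1)(k) - b_n(k) = (w_n(k) - w_n(k+1)) / (n+1)].  Since [w_n(0) = 1] and
    [w_n(k) -> 0] (for [k >= n] consecutive ratios are at most [3/4]), summing over
    [k] shows that passing from [n] to [n+1] adds exactly [1/(n+1)] to [sum_k b_n(k)].
    At [n = 0] this sum is [2 sum_k 2^-(k+1)/(k+1) = -2 log(1 - 1/2) = 2 log 2]. *)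

From Stdlib Require Import Reals Lra Lia.
From Coquelicot Require Import Coquelicot.
Open Scope R_scope.

Lemma poch_gt0 (a : R) (k : nat) : 0 < a -> 0 < poch a k.
Proof.
  intros Ha; induction k as [|k IH]; simpl; [lra|].
  pose proof (pos_INR k); apply Rmult_lt_0_compat; lra.
Qed.

Lemma poch1_fact (k : nat) : poch 1 k = INR (Factorial.fact k).
Proof.
  induction k as [|k IH]; simpl poch; [simpl; lra|].
  rewrite IH; change (Factorial.fact (S k)) with (S k * Factorial.fact k)%nat.
  rewrite mult_INR, S_INR; ring.
Qed.

Lemma poch2_fact (k : nat) : poch 2 k = INR (Factorial.fact (S k)).
Proof.
  induction k as [|k IH]; simpl poch; [simpl; lra|].
  rewrite IH; change (Factorial.fact (S (S k))) with (S (S k) * Factorial.fact (S k))%nat.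
  rewrite mult_INR, !S_INR; ring.
Qed.

Lemma sum_f_R0_telescope (u : nat -> R) (N : nat) :
  sum_f_R0 (fun k => u k - u (S k)) N = u 0%nat - u (S N).
Proof. induction N as [|N IH]; simpl; [ring | rewrite IH; ring]. Qed.

Lemma is_lim_seq_ratio_le (u : nat -> R) (r : R) (m : nat) :
  0 <= r < 1 -> (forall k, 0 <= u k) ->
  (forall k, (m <= k)%nat -> u (S k) <= r * u k) ->
  is_lim_seq u 0.
Proof.
  intros Hr Hpos Hratio.
  assert (Hgeom : forall j, u (j + m)%nat <= u m * r ^ j).
  { induction j as [|j IH]; [simpl; lra|].
    rewrite Nat.add_succ_l, <- tech_pow_Rmult.
    apply Rle_trans with (r * u (j + m)%nat); [apply Hratio; lia|].
    rewrite <- Rmult_assoc, (Rmult_comm (u m) r), Rmult_assoc.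
    apply Rmult_le_compat_l; lra. }
  apply (is_lim_seq_incr_n u m).
  apply is_lim_seq_le_le with (fun _ => 0) (fun j => u m * r ^ j).
  - intros j; split; auto.
  - apply is_lim_seq_const.
  - replace (Finite 0) with (Rbar_mult (u m) 0) by (simpl; f_equal; ring).
    apply is_lim_seq_scal_l, is_lim_seq_geom; rewrite Rabs_pos_eq; lra.
Qed.

Definition log_partial (N : nat) (x : R) : R :=
  sum_f_R0 (fun k => x ^ S k / INR (S k)) N.

Lemma log_partial_derive (N : nat) (x : R) :
  is_derive (log_partial N) x (sum_f_R0 (fun k => x ^ k) N).
Proof.
  induction N as [|N IH].
  - unfold log_partial; simpl; auto_derive; auto; field.
  - rewrite tech5.
    apply (is_derive_plus (log_partial N) (fun y => y ^ S (S N) / INR (S (S N))));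
      [exact IH|].
    assert (INR (S (S N)) <> 0) by (apply not_0_INR; lia).
    auto_derive; auto.
    change (match N with O => 1 | S _ => INR N + 1 end + 1) with (INR (S (S N))).
    simpl pow; field; auto.
Qed.

Lemma log_partial_0 (N : nat) : log_partial N 0 = 0.
Proof.
  unfold log_partial; induction N as [|N IH]; [simpl; field|].
  rewrite tech5, IH; simpl pow; unfold Rdiv; ring.
Qed.

Lemma log_partial_bound (N : nat) (x : R) : 0 < x < 1 ->
  0 <= - ln (1 - x) - log_partial N x <= x ^ S (S N) / (1 - x).
Proof.
  intros Hx.
  set (f := fun y => - ln (1 - y) - log_partial N y).
  destruct (MVT_cor2 f (fun c => c ^ S N / (1 - c)) 0 x) as [c [Hmvt Hc]]; [lra| |].
  { intros c Hc; apply is_derive_Reals.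
    assert (Hln : is_derive (fun y => - ln (1 - y)) c (/ (1 - c)))
      by (auto_derive; [lra | field; lra]).
    pose proof (is_derive_minus _ _ c _ _ Hln (log_partial_derive N c)) as Hf.
    rewrite tech3 in Hf by lra.
    replace (c ^ S N / (1 - c)) with (/ (1 - c) - (1 - c ^ S N) / (1 - c))
      by (field; lra).
    exact Hf. }
  unfold f in Hmvt; rewrite log_partial_0, !Rminus_0_r, ln_1 in Hmvt.
  assert (Hpow : 0 <= c ^ S N <= x ^ S N)
    by (split; [apply pow_le | apply pow_incr]; lra).
  assert (Hquot : c ^ S N / (1 - c) <= x ^ S N / (1 - x)).
  { apply Rmult_le_reg_r with ((1 - c) * (1 - x)); [nra|].
    replace (c ^ S N / (1 - c) * ((1 - c) * (1 - x))) with (c ^ S N * (1 - x))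
      by (field; lra).
    replace (x ^ S N / (1 - x) * ((1 - c) * (1 - x))) with (x ^ S N * (1 - c))
      by (field; lra).
    nra. }
  assert (0 <= c ^ S N / (1 - c)) by (apply Rdiv_le_0_compat; lra).
  replace (x ^ S (S N) / (1 - x)) with (x ^ S N / (1 - x) * x)
    by (simpl; field; lra).
  split; nra.
Qed.

Lemma log_partial_cv (x : R) : 0 < x < 1 ->
  is_lim_seq (fun N => log_partial N x) (- ln (1 - x)).
Proof.
  intros Hx.
  assert (Hrem : is_lim_seq (fun N => x ^ S (S N) / (1 - x)) 0).
  { apply is_lim_seq_ext with (fun N => x ^ (N + 2) * / (1 - x)).
    { intros N; unfold Rdiv; do 2 f_equal; lia. }
    replace (Finite 0) with (Rbar_mult 0 (/ (1 - x))) by (simpl; f_equal; ring).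
    apply is_lim_seq_scal_r, (is_lim_seq_incr_n (fun N => x ^ N) 2), is_lim_seq_geom.
    rewrite Rabs_pos_eq; lra. }
  apply is_lim_seq_le_le with
    (fun N => - ln (1 - x) - x ^ S (S N) / (1 - x)) (fun _ => - ln (1 - x)).
  - intros N; pose proof (log_partial_bound N x Hx); lra.
  - pose proof (is_lim_seq_minus' _ _ _ _ (is_lim_seq_const (- ln (1 - x))) Hrem) as Hlow.
    rewrite Rminus_0_r in Hlow; exact Hlow.
  - apply is_lim_seq_const.
Qed.

Definition weight (n k : nat) : R :=
  poch (2 * INR n + 2) k / poch (INR n + 2) k * (1/2) ^ k.

Lemma weight_gt0 (n k : nat) : 0 < weight n k.
Proof.
  pose proof (pos_INR n); unfold weight.
  apply Rmult_lt_0_compat; [apply Rdiv_lt_0_compat; apply poch_gt0; lra|].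
  apply pow_lt; lra.
Qed.

Lemma weight0 (n : nat) : weight n 0 = 1.
Proof. unfold weight; simpl; field. Qed.

Lemma weightSk (n k : nat) :
  weight n (S k) = weight n k * ((2 * INR n + 2 + INR k) / (INR n + 2 + INR k) / 2).
Proof.
  pose proof (pos_INR n); pose proof (pos_INR k).
  assert (0 < poch (INR n + 2) k) by (apply poch_gt0; lra).
  unfold weight; simpl poch; simpl pow; field; lra.
Qed.

Lemma weightSn (n k : nat) :
  weight (S n) k = weight n k * ((2 * INR n + INR k + 3) * (2 * INR n + INR k + 2) * (INR n + 2)
                     / ((2 * INR n + 2) * (2 * INR n + 3) * (INR n + INR k + 2))).
Proof.
  pose proof (pos_INR n).
  induction k as [|k IH].
  - rewrite !weight0; simpl; field; lra.
  - pose proof (pos_INR k).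
    rewrite weightSk, IH, weightSk, !S_INR; field; lra.
Qed.

Lemma weightSk_le (n k : nat) : (n <= k)%nat -> weight n (S k) <= 3/4 * weight n k.
Proof.
  intros Hnk; apply le_INR in Hnk.
  pose proof (pos_INR n); pose proof (weight_gt0 n k).
  rewrite weightSk, (Rmult_comm (3/4)); apply Rmult_le_compat_l; [lra|].
  apply Rmult_le_reg_r with (2 * (INR n + 2 + INR k)); [lra|].
  replace ((2 * INR n + 2 + INR k) / (INR n + 2 + INR k) / 2 * (2 * (INR n + 2 + INR k)))
    with (2 * INR n + 2 + INR k) by (field; lra).
  lra.
Qed.

Lemma weight_cv0 (n : nat) : is_lim_seq (weight n) 0.
Proof.
  apply is_lim_seq_ratio_le with (3/4) n; [lra | |].
  - intros k; left; apply weight_gt0.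
  - exact (weightSk_le n).
Qed.

Definition normalized_term (n k : nat) : R :=
  (2 * INR n + 1) / (INR n + 1) * (weight n k / (INR k + 1)).

Lemma F32_term_normalized (n k : nat) :
  F32_term 1 1 (2 * INR n + 2) 2 (INR n + 2) (1/2) k
  = (INR n + 1) / (2 * INR n + 1) * normalized_term n k.
Proof.
  pose proof (pos_INR n); pose proof (pos_INR k); pose proof (INR_fact_neq_0 k).
  assert (0 < poch (INR n + 2) k) by (apply poch_gt0; lra).
  unfold F32_term, normalized_term, weight.
  rewrite poch1_fact, poch2_fact.
  change (Factorial.fact (S k)) with (S k * Factorial.fact k)%nat.
  rewrite mult_INR, S_INR; field; repeat split; lra.
Qed.

Lemma normalized_termSn (n k : nat) :
  normalized_term (S n) k - normalized_term n k = (weight n k - weight n (S k)) / (INR n + 1).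
Proof.
  pose proof (pos_INR n); pose proof (pos_INR k).
  unfold normalized_term; rewrite weightSn, weightSk, S_INR; field; lra.
Qed.

Lemma sum_normalized_termSn (n N : nat) :
  sum_f_R0 (normalized_term (S n)) N
  = sum_f_R0 (normalized_term n) N + (1 - weight n (S N)) / (INR n + 1).
Proof.
  assert (Hdiff : sum_f_R0 (normalized_term (S n)) N - sum_f_R0 (normalized_term n) N
                  = sum_f_R0 (fun k => weight n k - weight n (S k)) N / (INR n + 1)).
  { rewrite <- minus_sum; unfold Rdiv; rewrite Rmult_comm, scal_sum.
    apply sum_eq; intros k _; apply normalized_termSn. }
  rewrite sum_f_R0_telescope, weight0 in Hdiff; lra.
Qed.

Lemma normalized_term0 (k : nat) :
  normalized_term 0 k = 2 * ((1/2) ^ S k / INR (S k)).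
Proof.
  pose proof (pos_INR k).
  assert (0 < poch (0 + 2) k) by (apply poch_gt0; lra).
  unfold normalized_term, weight; change (INR 0) with 0.
  replace (2 * 0 + 2) with (0 + 2) by ring.
  rewrite S_INR, <- tech_pow_Rmult; field; lra.
Qed.

Lemma sum_normalized_term_cv (n : nat) :
  is_lim_seq (fun N => sum_f_R0 (normalized_term n) N) (harmonic n + 2 * ln 2).
Proof.
  induction n as [|n IH].
  - apply is_lim_seq_ext with (fun N => 2 * log_partial N (1/2)).
    { intros N; unfold log_partial; rewrite scal_sum.
      apply sum_eq; intros k _; rewrite normalized_term0; ring. }
    replace (harmonic 0 + 2 * ln 2) with (2 * - ln (1 - 1/2))
      by (replace (1 - 1/2) with (/ 2) by field; rewrite ln_Rinv by lra; simpl; ring).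
    apply (is_lim_seq_scal_l _ 2 (- ln (1 - 1/2))), log_partial_cv; lra.
  - apply is_lim_seq_ext with
      (fun N => sum_f_R0 (normalized_term n) N + (1 - weight n (S N)) * / (INR n + 1)).
    { intros N; rewrite sum_normalized_termSn; reflexivity. }
    replace (harmonic (S n) + 2 * ln 2)
      with ((harmonic n + 2 * ln 2) + (1 - 0) * / (INR n + 1))
      by (change (harmonic (S n)) with (harmonic n + / INR (S n)); rewrite S_INR; ring).
    apply is_lim_seq_plus'; [exact IH|].
    apply is_lim_seq_mult'; [|apply is_lim_seq_const].
    apply is_lim_seq_minus'; [apply is_lim_seq_const|].
    apply (is_lim_seq_incr_1 (weight n)), weight_cv0.
Qed.

Theorem mainTheorem14 (n : nat) :
  exists L : R,
    F32_is 1 1 (2 * INR n + 2) 2 (INR n + 2) (1/2) L /\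
    (2 * INR n + 1) / (INR n + 1) * L = harmonic n + 2 * ln 2.
Proof.
  pose proof (pos_INR n).
  exists ((INR n + 1) / (2 * INR n + 1) * (harmonic n + 2 * ln 2)); split.
  - apply is_lim_seq_Reals.
    apply is_lim_seq_ext with
      (fun N => (INR n + 1) / (2 * INR n + 1) * sum_f_R0 (normalized_term n) N).
    { intros N; rewrite scal_sum; apply sum_eq; intros k _.
      rewrite F32_term_normalized; ring. }
    apply (is_lim_seq_scal_l _ _ (harmonic n + 2 * ln 2)), sum_normalized_term_cv.
  - field; lra.
Qed.
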